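(* Let $\mathbb{F}$, $\mathfrak g$, $\mathcal C$, $\mathcal C^{du}$, $Nat$, $M$, $\mathbb F[M]$, $Lie(M)$ be as in the context. Then: (a) $M$ is a Zariski closed submonoid of $Nat$; (b) $\mathbb F[M]$ coincides with the restriction of $\mathbb F[Nat]$ to $M$; (c) the map $x\mapsto\delta_x$ is an isomorphism of Lie algebras from $Lie(M)$ onto $T_1M$, the Lie algebra of the weak algebraic monoid $(M,\mathbb F[M],\mathcal F_M)$.
   Context: Let $\mathbb F$ be a field of characteristic $0$, $\mathfrak g$ a Lie algebra over $\mathbb F$, $\mathcal C$ a full subcategory of $\mathfrak g$-modules closed under isomorphism and submodules, containing a direct sum and tensor product of any two objects and a one-dimensional trivial module, with $\mathfrak g$ acting faithfully. $x_V$ = action on $V$. Category of duals: point-separating $V^{du}\subseteq V^*$ with $\phi\circ x_V\in V^{du}$ ($x\in\mathfrak g$), $\psi\circ\alpha\in V^{du}$ for morphisms $\alpha:V\to W$, $\psi\in W^{du}$, $(V\oplus W)^{du}=V^{du}\oplus W^{du}$, $V^{du}\otimes W^{du}\subseteq(V\otimes W)^{du}$. $End_{V^{du}}(V)=\{\varphi:\phi\circ\varphi\in V^{du}\ \forall\phi\}$. $Nat$: families $(m_V)_V$, $m_V\in End_{V^{du}}(V)$, commuting with all morphisms of $\mathcal C$; an associative unital algebra and a Lie algebra. $\mathbb F[Nat]$ is the algebra of functions on $Nat$ generated by the linear functions $\tilde f_{\phi v}(m)=\phi(m_Vv)$ ($V$ object, $v\in V$, $\phi\in V^{du}$); Zariski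 topology = common zero sets of subsets of $\mathbb F[Nat]$. $M=\{m\in Nat:m_{V\otimes W}=m_V\otimes m_W,\ m_{V_0}=id$ on trivial one-dimensional $V_0\}$; $\mathbb F[M]=\{f_{\phi v}\}$ with $f_{\phi v}(m)=\phi(m_Vv)$. $Lie(M)=\{x\in Nat:x_{V\otimes W}=x_V\otimes id+id\otimes x_W,\ x_{V_0}=0,\ \exists\,\delta_x:\mathbb F[M]\to\mathbb F$ with $\delta_x(f_{\phi v})=\phi(x_Vv)\}$ with the commutator bracket of $Nat$; each $\delta_x$ is a derivation of $\mathbb F[M]$ at $1$. Filters: $\mathcal F_{Nat}$ is the set of ideals $J$ of $\mathbb F[Nat]$ containing the vanishing ideal $I_{Nat}(U)$ of some finite-dimensional linear subspace $U\subseteq Nat$; $\mathcal F_M=\{J|_M:J\in\mathcal F_{Nat}\}$ (restrictions to $M$). $T_1M$ is the space of derivations $\delta:\mathbb F[M]\to\mathbb F$ at $1$ (i.e. $\delta(fg)=f(1)\delta(g)+g(1)\delta(f)$) vanishing on some $J\in\mathcal F_M$. For $\delta\in T_1M$ let $D_\delta\in Der(\mathbb F[M])$ be $(D_\delta f)(m)=\delta(l_m^*f)$ with $(l_m^*f)(n)=f(mn)$; the Lie bracket on $T_1M$ is defined by $[\delta,\delta'](f)=([D_\delta,D_{\delta'}]f)(1)$ (this makes $(M,\mathbb F[M],\mathcal F_M)$ a weak algebraic monoid with Lie algebra $T_1M$). *)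

From HB Require Import structures.
From mathcomp Require Import all_boot all_algebra.

Unset Printing Implicit Defensive.

Import GRing.Theory.
Local Open Scope ring_scope.

Section Defs.
Variable F : fieldType.

Definition linmap {U W : lmodType F} (f : U -> W) :=
  forall (a : F) (x y : U), f (a *: x + y) = a *: f x + f y.
Definition linfun {U : lmodType F} (f : U -> F) :=
  forall (a : F) (x y : U), f (a *: x + y) = a * f x + f y.
Definition bilin {U V W : lmodType F} (b : U -> V -> W) :=
  (forall v, linmap (b^~ v)) /\ (forall u, linmap (b u)).

Definition lie_algebra {g : lmodType F} (br : g -> g -> g) :=
  bilin br /\ (forall x, br x x = 0) /\
  (forall x y z, br x (br y z) + br y (br z x) + br z (br x y) = 0).

Variable g : lmodType F.
Variable br : g -> g -> g.

Record gmod := GMod { gcar :> lmodType F; gact : g -> gcar -> gcar }.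
Arguments gact : clear implicits.

Definition is_gmod (V : gmod) :=
  bilin (gact V) /\
  (forall x y v, gact V (br x y) v = gact V x (gact V y v) - gact V y (gact V x v)).

Definition morph {V W : gmod} (f : V -> W) :=
  linmap f /\ forall x v, f (gact V x v) = gact W x (f v).

Definition is_tensor {V W T : lmodType F} (t : V -> W -> T) :=
  bilin t /\
  forall (U : lmodType F) (b : V -> W -> U), bilin b ->
    exists! f : T -> U, linmap f /\ forall v w, f (t v w) = b v w.

Definition tensor_obj {V W T : gmod} (t : V -> W -> T) :=
  is_tensor t /\
  forall x v w, gact T x (t v w) = t (gact V x v) w + t v (gact W x w).

Definition biprod {V W D : gmod} (i1 : V -> D) (i2 : W -> D) (p1 : D -> V) (p2 : D -> W) :=
  morph i1 /\ morph i2 /\ morph p1 /\ morph p2 /\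
  (forall v, p1 (i1 v) = v) /\ (forall w, p2 (i2 w) = w) /\
  (forall v, p2 (i1 v) = 0) /\ (forall w, p1 (i2 w) = 0) /\
  (forall d, i1 (p1 d) + i2 (p2 d) = d).

Definition trivial1 (V : gmod) :=
  (exists e : V, e <> 0 /\ forall v : V, exists a : F, v = a *: e) /\
  (forall x v, gact V x v = 0).

(** the category C: a class of g-modules, closed under isomorphism and
    submodules (= sources of injective morphisms), direct sums, tensor
    products, containing a trivial one-dimensional module, acting faithfully *)
Definition category (C : gmod -> Prop) :=
  (forall V, C V -> is_gmod V) /\
  (forall (V W : gmod) (f : W -> V), C V -> is_gmod W -> morph f -> injective f -> C W) /\
  (forall V W, C V -> C W -> exists D i1 i2 p1 p2, C D /\ @biprod V W D i1 i2 p1 p2) /\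
  (forall V W, C V -> C W -> exists T t, C T /\ @tensor_obj V W T t) /\
  (exists V0, C V0 /\ trivial1 V0) /\
  (forall x, (forall V, C V -> forall v : V, gact V x v = 0) -> x = 0).

Variable C : gmod -> Prop.
Variable du : forall V : gmod, (V -> F) -> Prop.

Definition dual_cat :=
  (forall V, C V -> forall phi, du V phi -> linfun phi) /\
  (forall V, C V -> du V (fun _ => 0) /\
     forall a phi psi, du V phi -> du V psi -> du V (fun v => a * phi v + psi v)) /\
  (forall V, C V -> forall v : V, v <> 0 -> exists phi, du V phi /\ phi v <> 0) /\
  (forall V, C V -> forall x phi, du V phi -> du V (phi \o gact V x)) /\
  (forall (V W : gmod) (al : V -> W), C V -> C W -> morph al ->
     forall psi, du W psi -> du V (psi \o al)) /\
  (forall V W D i1 i2 p1 p2, C V -> C W -> C D -> @biprod V W D i1 i2 p1 p2 ->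
     forall chi : D -> F,
       du D chi <-> exists phi psi, du V phi /\ du W psi /\
                                    chi = (fun d => phi (p1 d) + psi (p2 d))) /\
  (forall V W T t, C V -> C W -> C T -> @tensor_obj V W T t ->
     forall phi psi (chi : T -> F), du V phi -> du W psi -> linfun chi ->
       (forall v w, chi (t v w) = phi v * psi w) -> du T chi).

Definition NatT := forall V : gmod, C V -> V -> V.

Definition idN : NatT := fun V _ v => v.
Definition compN (m n : NatT) : NatT := fun V p v => m V p (n V p v).
Definition lincomb2 (a : F) (x y : NatT) : NatT := fun V p v => a *: x V p v + y V p v.
Definition brN (x y : NatT) : NatT :=
  fun V p v => x V p (y V p v) - y V p (x V p v).

Definition isNat (m : NatT) :=
  (forall V (p : C V), linmap (m V p) /\
      forall phi, du V phi -> du V (phi \o m V p)) /\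
  (forall (V W : gmod) (p : C V) (q : C W) (al : V -> W), morph al ->
      forall v, al (m V p v) = m W q (al v)).

Definition coef {V : gmod} (p : C V) (v : V) (phi : V -> F) : NatT -> F :=
  fun m => phi (m V p v).

Inductive FNat_gen : (NatT -> F) -> Prop :=
| FG_cst (a : F) : FNat_gen (fun _ => a)
| FG_coef (V : gmod) (p : C V) (v : V) (phi : V -> F) :
    du V phi -> FNat_gen (coef p v phi)
| FG_add f h : FNat_gen f -> FNat_gen h -> FNat_gen (fun m => f m + h m)
| FG_mul f h : FNat_gen f -> FNat_gen h -> FNat_gen (fun m => f m * h m).

Definition agreeNat (f h : NatT -> F) := forall m, isNat m -> f m = h m.
Definition inFNat (f : NatT -> F) := exists h, FNat_gen h /\ agreeNat f h.

Definition isM (m : NatT) :=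
  isNat m /\
  (forall V W T (p : C V) (q : C W) (r : C T) (t : V -> W -> T), tensor_obj t ->
     forall v w, m T r (t v w) = t (m V p v) (m W q w)) /\
  (forall V0 (p : C V0), trivial1 V0 -> forall v, m V0 p v = v).

Definition agreeM (f h : NatT -> F) := forall m, isM m -> f m = h m.

Definition inFM (f : NatT -> F) :=
  exists V (p : C V) (v : V) phi, du V phi /\ agreeM f (coef p v phi).

Definition respM (d : (NatT -> F) -> F) := forall f h, agreeM f h -> d f = d h.

(** d is the functional delta_x *)
Definition reprD (d : (NatT -> F) -> F) (x : NatT) :=
  respM d /\ forall V (p : C V) v phi, du V phi -> d (coef p v phi) = phi (x V p v).

Definition isLieM (x : NatT) :=
  isNat x /\
  (forall V W T (p : C V) (q : C W) (r : C T) (t : V -> W -> T), tensor_obj t ->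
     forall v w, x T r (t v w) = t (x V p v) w + t v (x W q w)) /\
  (forall V0 (p : C V0), trivial1 V0 -> forall v, x V0 p v = 0) /\
  (exists d, reprD d x).

Definition lincombN (us : seq NatT) (c : seq F) : NatT :=
  fun V p v => \sum_(i < size us) c`_i *: (nth idN us i) V p v.

Definition inSpan (us : seq NatT) (u : NatT) := exists c : seq F, u = lincombN us c.

Definition idealNat (J : (NatT -> F) -> Prop) :=
  (forall h, J h -> inFNat h) /\ J (fun _ => 0) /\
  (forall h h', J h -> J h' -> J (fun m => h m + h' m)) /\
  (forall h f, J h -> inFNat f -> J (fun m => f m * h m)) /\
  (forall h h', J h -> agreeNat h h' -> J h').

Definition filterNat (J : (NatT -> F) -> Prop) :=
  idealNat J /\
  exists us : seq NatT, (forall i, (i < size us)%N -> isNat (nth idN us i)) /\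
    (forall h, inFNat h -> (forall u, inSpan us u -> h u = 0) -> J h).

Definition isT1 (d : (NatT -> F) -> F) :=
  respM d /\
  (forall a f h, inFM f -> inFM h -> d (fun m => a * f m + h m) = a * d f + d h) /\
  (forall f h, inFM f -> inFM h -> d (fun m => f m * h m) = f idN * d h + h idN * d f) /\
  (exists J, filterNat J /\ forall h, J h -> d h = 0).

Definition Dop (d : (NatT -> F) -> F) (f : NatT -> F) : NatT -> F :=
  fun m => d (fun n => f (compN m n)).

Definition bracketT (d d' : (NatT -> F) -> F) : (NatT -> F) -> F :=
  fun f => Dop d (Dop d' f) idN - Dop d' (Dop d f) idN.

End Defs.
Arguments gact {F g} _ _ _.
Arguments is_gmod {F g} br V.
Arguments category {F g} br C.
Arguments dual_cat {F g} C du.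
Arguments NatT {F g} C.
Arguments idN {F g C} V _ v.
Arguments compN {F g C} m n V p v.
Arguments lincomb2 {F g C} a x y V p v.
Arguments brN {F g C} x y V p v.
Arguments isNat {F g} C du m.
Arguments isM {F g} C du m.
Arguments agreeM {F g} C du f h.
Arguments agreeNat {F g} C du f h.
Arguments inFNat {F g} C du f.
Arguments inFM {F g} C du f.
Arguments respM {F g} C du d.
Arguments reprD {F g} C du d x.
Arguments isLieM {F g} C du x.
Arguments isT1 {F g} C du d.
Arguments Dop {F g C} d f m.
Arguments bracketT {F g C} d d' f.
Arguments lie_algebra {F g} br.
Arguments linmap {F U W} f.
Arguments linfun {F U} f.
Arguments bilin {F U V W} b.
Arguments morph {F g V W} f.
Arguments is_tensor {F V W T} t.
Arguments tensor_obj {F g V W T} t.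
Arguments biprod {F g V W D} i1 i2 p1 p2.
Arguments trivial1 {F g} V.
Arguments coef {F g C V} p v phi m.
Arguments lincombN {F g C} us c V p v.
Arguments inSpan {F g C} us u.
Arguments idealNat {F g} C du J.
Arguments filterNat {F g} C du J.

(* Everything reduces to matrix coefficients [coef p v phi]: biproducts and tensor products of
   objects turn linear combinations and products of matrix coefficients into matrix coefficients,
   which gives (b) and makes every [delta_x] a derivation at [1].  Product functionals separate a
   tensor product (its pure tensors span it, by the universal property), so an element of [Nat]
   lies in [M] iff it satisfies the polynomial equations "coefficient of [t v w] = product of
   coefficients" and "identity on trivial modules"; this gives (a).  For (c), an element of
   [F[Nat]] restricted to the line [s |-> id + s x] is a polynomial in [s] whose linear
   coefficient is [delta_x], so in characteristic 0 [delta_x] kills the vanishing ideal of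
   [span (id, x)].  Conversely, a derivation killing the vanishing ideal of [span us] is, on
   matrix coefficients, a linear combination of evaluations at the [us], i.e. some [delta_x];
   the derivation rule then forces [x] to act on tensor products by the Leibniz rule. *)

From HB Require Import structures.
From mathcomp Require Import all_boot all_algebra.
From mathcomp Require Import ring.
From Stdlib Require Import ClassicalEpsilon FunctionalExtensionality PropExtensionality Classical.
Import GRing.Theory.
Local Open Scope ring_scope.
Set Implicit Arguments. Unset Strict Implicit.

Section LinearAlgebra.
Variable F : fieldType.

Section Linmap.
Variables (U W : lmodType F) (f : U -> W).
Hypothesis f_lin : linmap f.
Let f_linear : {linear U -> W} := HB.pack f (GRing.isLinear.Build F U W *:%R f f_lin).

Lemma linmap0 : f 0 = 0. Proof. exact: linear0 f_linear. Qed.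
Lemma linmapD x y : f (x + y) = f x + f y. Proof. exact: linearD f_linear x y. Qed.
Lemma linmapB x y : f (x - y) = f x - f y. Proof. exact: linearB f_linear x y. Qed.
Lemma linmapZ a x : f (a *: x) = a *: f x. Proof. exact: linearZZ f_linear a x. Qed.
Lemma linmap_sum (I : Type) (r : seq I) (P : pred I) (G : I -> U) :
  f (\sum_(i <- r | P i) G i) = \sum_(i <- r | P i) f (G i).
Proof. have := raddf_sum f_linear; exact. Qed.
End Linmap.

Section Linfun.
Variables (U : lmodType F) (phi : U -> F).
Hypothesis phi_lin : linfun phi.
Let phi_linmap : linmap (phi : U -> F^o) := phi_lin.

Lemma linfun0 : phi 0 = 0. Proof. exact: linmap0 phi_linmap. Qed.
Lemma linfunD x y : phi (x + y) = phi x + phi y. Proof. exact: linmapD phi_linmap x y. Qed.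
Lemma linfunB x y : phi (x - y) = phi x - phi y. Proof. exact: linmapB phi_linmap x y. Qed.
Lemma linfunZ a x : phi (a *: x) = a * phi x. Proof. exact: linmapZ phi_linmap a x. Qed.
Lemma linfun_sum (I : Type) (r : seq I) (P : pred I) (G : I -> U) :
  phi (\sum_(i <- r | P i) G i) = \sum_(i <- r | P i) phi (G i).
Proof. have := linmap_sum phi_linmap r P G; exact. Qed.
End Linfun.

Section SubspaceQuotient.
Variables (T : lmodType F) (S : T -> Prop).
Hypotheses (S0 : S 0) (S_comb : forall a x y, S x -> S y -> S (a *: x + y)).

Let SD x y : S x -> S y -> S (x + y).
Proof. by move=> Sx Sy; have := S_comb 1 Sx Sy; rewrite scale1r. Qed.
Let SZ a x : S x -> S (a *: x).
Proof. by move=> Sx; have := S_comb a Sx S0; rewrite addr0. Qed.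
Let SB x y : S x -> S y -> S (x - y).
Proof. by move=> Sx Sy; rewrite -scaleN1r addrC; apply: S_comb. Qed.

Let qrepr (x : T) : T := epsilon (inhabits 0) (fun y => S (y - x)).

Let qreprP x : S (qrepr x - x).
Proof. by apply: (epsilon_spec (inhabits 0) (fun y => S (y - x))); exists x; rewrite subrr. Qed.

Let qrepr_eq x y : S (x - y) -> qrepr x = qrepr y.
Proof.
move=> Sxy; rewrite /qrepr; congr epsilon; apply: functional_extensionality => z.
apply: propositional_extensionality; split => Sz.
- by have := SD Sz Sxy; rewrite addrA subrK.
- by have := SB Sz Sxy; rewrite opprB addrA subrK.
Qed.

(* [T / S], as the set of chosen coset representatives *)
Let Q : Type := {x : T | qrepr x == x}.
HB.instance Definition _ := Choice.on Q.

Let quot (x : T) : Q := exist _ (qrepr x) (introT eqP (qrepr_eq (qreprP x))).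

Let quot_eq x y : S (x - y) -> quot x = quot y.
Proof. by move=> Sxy; apply: val_inj; apply: qrepr_eq. Qed.

Let quotK (a : Q) : quot (val a) = a.
Proof. by apply: val_inj => /=; apply/eqP; case: a. Qed.

Let quot_inj x y : quot x = quot y -> S (x - y).
Proof.
move=> /(congr1 val) /= Exy.
by have := SB (qreprP y) (qreprP x); rewrite Exy opprB addrC addrA subrK.
Qed.

Let quot_absorbD x y : quot (val (quot x) + y) = quot (x + y).
Proof. by apply: quot_eq; rewrite /= opprD addrACA subrr addr0; apply: qreprP. Qed.

Let quot_absorbDr x y : quot (x + val (quot y)) = quot (x + y).
Proof. by rewrite addrC quot_absorbD addrC. Qed.

Let quot_absorbZ a x : quot (a *: val (quot x)) = quot (a *: x).
Proof. by apply: quot_eq; rewrite -scalerBr; apply: SZ; apply: qreprP. Qed.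

Let Qadd (a b : Q) := quot (val a + val b).
Let Qopp (a : Q) := quot (- val a).
Let Qscale (c : F) (a : Q) := quot (c *: val a).

Let QaddA : associative Qadd.
Proof. by move=> a b c; rewrite /Qadd [val a + _]addrC !quot_absorbD addrC addrA. Qed.
Let QaddC : commutative Qadd.
Proof. by move=> a b; rewrite /Qadd addrC. Qed.
Let Qadd0 : left_id (quot 0) Qadd.
Proof. by move=> a; rewrite /Qadd quot_absorbD add0r quotK. Qed.
Let QaddN : left_inverse (quot 0) Qopp Qadd.
Proof. by move=> a; rewrite /Qadd quot_absorbD addNr. Qed.
HB.instance Definition _ := GRing.isZmodule.Build Q QaddA QaddC Qadd0 QaddN.

Let QscaleA a b v : Qscale a (Qscale b v) = Qscale (a * b) v.
Proof. by rewrite /Qscale quot_absorbZ scalerA. Qed.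
Let Qscale1 : left_id 1 Qscale.
Proof. by move=> a; rewrite /Qscale scale1r quotK. Qed.
Let QscaleDr : right_distributive Qscale Qadd.
Proof. by move=> c a b; rewrite /Qscale /Qadd quot_absorbZ quot_absorbD quot_absorbDr scalerDr. Qed.
Let QscaleDl v a b : Qscale (a + b) v = Qadd (Qscale a v) (Qscale b v).
Proof. by rewrite /Qscale /Qadd quot_absorbD quot_absorbDr scalerDl. Qed.
HB.instance Definition _ := GRing.Zmodule_isLmodule.Build F Q QscaleA Qscale1 QscaleDr QscaleDl.

Let quot_linmap : linmap quot.
Proof.
move=> a x y; change (quot (a *: x + y) = Qadd (Qscale a (quot x)) (quot y)).
rewrite /Qadd /Qscale quot_absorbD quot_absorbDr; symmetry; apply: quot_eq.
by rewrite opprD addrACA subrr addr0 -scalerBr; apply/SZ/qreprP.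
Qed.

Lemma subspace_full_of_linmap_unique :
  (forall (U : lmodType F) (f1 f2 : T -> U), linmap f1 -> linmap f2 ->
     (forall x, S x -> f1 x = f2 x) -> f1 = f2) ->
  forall x, S x.
Proof.
move=> uniq x; rewrite -[x]subr0; apply: quot_inj.
have -> : quot = fun=> quot 0.
  apply: uniq quot_linmap _ _ => [a y z|y Sy]; first by rewrite scaler0 addr0.
  by apply: quot_eq; rewrite subr0.
by [].
Qed.
End SubspaceQuotient.

Section Tensor.
Variables (V W T : lmodType F) (t : V -> W -> T).
Hypothesis t_tensor : is_tensor t.
Let t_bilin : bilin t := t_tensor.1.

Definition pure_span (s : T) := exists l : seq (V * W), s = \sum_(x <- l) t x.1 x.2.

Lemma tensor_pure_span s : pure_span s.
Proof.
apply: subspace_full_of_linmap_unique => [|a _ _ [l ->] [l' ->]|U f1 f2 f1_lin f2_lin f12].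
- by exists [::]; rewrite big_nil.
- exists ([seq (a *: x.1, x.2) | x <- l] ++ l').
  rewrite big_cat big_map scaler_sumr; congr (_ + _).
  by apply: eq_bigr => x _; rewrite (linmapZ (t_bilin.1 x.2)).
have f1t_bilin : bilin (fun v w => f1 (t v w)).
  by split=> [w|v] a x y; rewrite ?(t_bilin.1 w) ?(t_bilin.2 v) f1_lin.
have [f [_ f_uniq]] := t_tensor.2 U _ f1t_bilin.
rewrite -(f_uniq f1) ?(f_uniq f2) //; split=> // v w.
by rewrite f12 //; exists [:: (v, w)]; rewrite big_seq1.
Qed.

Lemma tensor_prod_functional (phi : V -> F) (psi : W -> F) : linfun phi -> linfun psi ->
  exists chi : T -> F, linfun chi /\ forall v w, chi (t v w) = phi v * psi w.
Proof.
move=> phi_lin psi_lin.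
have prod_bilin : @bilin F V W F^o (fun v w => phi v * psi w).
  by split=> [w|v] a x y /=; [rewrite phi_lin mulrDl -mulrA | rewrite psi_lin mulrDr mulrCA].
by have [chi [[chi_lin chi_t] _]] := t_tensor.2 F^o _ prod_bilin; exists chi.
Qed.

Lemma pure_sum_drop_dependent n (vs : 'I_n.+1 -> V) (ws : 'I_n.+1 -> W) (a : 'I_n.+1 -> F) j :
  a j != 0 -> \sum_i a i *: vs i = 0 ->
  exists (vs' : 'I_n -> V) (ws' : 'I_n -> W),
    \sum_i t (vs i) (ws i) = \sum_i t (vs' i) (ws' i).
Proof.
move=> aj0 rel; pose b i := - (a j)^-1 * a (lift j i).
have vsj : vs j = \sum_i b i *: vs (lift j i).
  under eq_bigr do rewrite -scalerA.
  rewrite -scaler_sumr; move/eqP: rel; rewrite (bigD1_ord j) //= addrC addr_eq0 => /eqP ->.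
  by rewrite scaleNr scalerN opprK scalerA mulVf // scale1r.
exists (fun i => vs (lift j i)), (fun i => ws (lift j i) + b i *: ws j).
rewrite (bigD1_ord j) //= vsj (linmap_sum (t_bilin.1 (ws j))) -big_split /=.
apply: eq_bigr => i _.
by rewrite (linmapD (t_bilin.2 _)) (linmapZ (t_bilin.1 _)) -(linmapZ (t_bilin.2 _)) addrC.
Qed.

Variables (DV : (V -> F) -> Prop) (DW : (W -> F) -> Prop).
Hypotheses (DV_lin : forall phi, DV phi -> linfun phi) (DW_lin : forall psi, DW psi -> linfun psi).
Hypotheses (DV_sep : forall v, v <> 0 -> exists phi, DV phi /\ phi v <> 0)
           (DW_sep : forall w, w <> 0 -> exists psi, DW psi /\ psi w <> 0).

Definition prod_annihilated (s : T) := forall phi psi chi, DV phi -> DW psi -> linfun chi ->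
  (forall v w, chi (t v w) = phi v * psi w) -> chi s = 0.

Lemma pure_sum_free_eq0 n (vs : 'I_n -> V) (ws : 'I_n -> W) :
  (forall a : 'I_n -> F, \sum_i a i *: vs i = 0 -> forall i, a i = 0) ->
  prod_annihilated (\sum_i t (vs i) (ws i)) -> forall i, ws i = 0.
Proof.
move=> vs_free annihil i; apply: NNPP => /DW_sep [psi [DWpsi psi_wsi]].
apply/psi_wsi/(vs_free (fun k => psi (ws k))); apply: NNPP => /DV_sep [phi [DVphi []]].
have [chi [chi_lin chi_t]] := tensor_prod_functional (DV_lin DVphi) (DW_lin DWpsi).
rewrite -(annihil phi psi chi) // (linfun_sum chi_lin) (linfun_sum (DV_lin DVphi)).
by apply: eq_bigr => k _; rewrite chi_t (linfunZ (DV_lin DVphi)) mulrC.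
Qed.

Lemma pure_sum_annihilated_eq0 n (vs : 'I_n -> V) (ws : 'I_n -> W) :
  prod_annihilated (\sum_i t (vs i) (ws i)) -> \sum_i t (vs i) (ws i) = 0.
Proof.
elim: n vs ws => [|n IH] vs ws annihil; first by rewrite big_ord0.
case: (classic (exists a : 'I_n.+1 -> F, (exists j, a j != 0) /\ \sum_i a i *: vs i = 0)).
  move=> [a [[j aj0] rel]]; have [vs' [ws' E]] := pure_sum_drop_dependent ws aj0 rel.
  by rewrite E; apply: IH; rewrite -E.
move=> dep; have vs_free a : \sum_i a i *: vs i = 0 -> forall i, a i = 0.
  by move=> rel i; apply: NNPP => ai0; apply: dep; exists a; split=> //; exists i; apply/eqP.
apply: big1 => i _; rewrite (pure_sum_free_eq0 vs_free annihil i).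
exact: linmap0 (t_bilin.2 (vs i)).
Qed.

Lemma tensor_prod_separated s : prod_annihilated s -> s = 0.
Proof.
have [l ->] := tensor_pure_span s; rewrite (big_nth (0, 0)) big_mkord.
exact: (@pure_sum_annihilated_eq0 _ (fun i => (nth (0, 0) l i).1) (fun i => (nth (0, 0) l i).2)).
Qed.
End Tensor.

(* [X] need not be a vector space: it suffices that the joint values of [f] and [gs] be closed
   under linear combinations. *)
Lemma kernel_inclusion_span (X : Type) n (gs : 'I_n -> X -> F) (f : X -> F) :
  (forall a x y, exists z, f z = a * f x + f y /\ forall i, gs i z = a * gs i x + gs i y) ->
  (forall x, (forall i, gs i x = 0) -> f x = 0) ->
  exists c : seq F, forall x, f x = \sum_(i < n) c`_i * gs i x.
Proof.
elim: n gs f => [|n IH] gs f comb ker.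
  by exists [::] => x; rewrite big_ord0; apply: ker => -[].
pose g := gs ord0; pose gs' i := gs (lift ord0 i).
have comb_tail h : (forall a x y z, f z = a * f x + f y -> g z = a * g x + g y ->
    h z = a * h x + h y) ->
    forall a x y, exists z, h z = a * h x + h y /\ forall i, gs' i z = a * gs' i x + gs' i y.
  move=> h_comb a x y; have [z [fz gsz]] := comb a x y.
  by exists z; split=> [|i]; [exact: h_comb fz (gsz ord0) | exact: gsz].
have cons_sum k c x : \sum_(i < n.+1) (k :: c)`_i * gs i x = k * g x + \sum_(i < n) c`_i * gs' i x.
  by rewrite big_ord_recl; congr (_ + _); apply: eq_bigr => i _; rewrite lift0.
case: (classic (exists x0, (forall i, gs' i x0 = 0) /\ g x0 <> 0)) => [[x0 [gsx0 gx0]]|no_x0].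
  pose k := f x0 / g x0.
  have [|x gsx|c Ec] := IH gs' (fun x => f x - k * g x).
  - by apply: comb_tail => a x y z -> ->; ring.
  - have [z [fz gsz]] := comb (- (g x / g x0)) x0 x.
    have : f z = 0.
      apply: ker => i; rewrite gsz; case: (unliftP ord0 i) => [j ->|->].
        by rewrite -/(gs' j) gsx0 gsx mulr0 addr0.
      by rewrite -/g; field; apply/eqP.
    by rewrite fz /k => fx; rewrite -[RHS]fx; field; apply/eqP.
  by exists (k :: c) => x; rewrite cons_sum -Ec; ring.
have [|x gsx|c Ec] := IH gs' f; first by apply: comb_tail => a x y z ->.
  apply: ker => i; case: (unliftP ord0 i) => [j ->|->]; first exact: gsx.
  by apply: NNPP => gx; apply: no_x0; exists x.
by exists (0 :: c) => x; rewrite cons_sum mul0r add0r Ec.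
Qed.

Lemma pchar0_natr_inj : [pchar F] =i pred0 -> injective (fun i : nat => i%:R : F).
Proof.
move=> /pcharf0P F0 i j; wlog le_ij : i j / (i <= j)%N => [sym|/= E].
  by case: (leqP i j) => [/sym //|/ltnW /sym sym_ji /esym /sym_ji].
by apply/eqP; rewrite eqn_leq le_ij -subn_eq0 -F0 natrB // E subrr eqxx.
Qed.

Lemma pchar0_poly_eq0 (P : {poly F}) : [pchar F] =i pred0 -> (forall s, P.[s] = 0) -> P = 0.
Proof.
move=> F0 P0; apply/eqP; apply: contraT => P_neq0.
have := @max_poly_roots F P [seq i%:R | i <- iota 0 (size P)] P_neq0.
rewrite size_map size_iota ltnn; apply; first by apply/allP => _ /mapP [i _ ->]; rewrite /root P0.
by rewrite map_inj_in_uniq ?iota_uniq // => i j _ _; apply: pchar0_natr_inj.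
Qed.
End LinearAlgebra.
Unset Implicit Arguments.

Section WeakAlgebraicMonoid.
Context {F : fieldType} {g : lmodType F} {br : g -> g -> g}
  {C : gmod F g -> Prop} {du : forall V : gmod F g, (V -> F) -> Prop}.
Hypotheses (C_cat : category br C) (du_cat : dual_cat C du).
Implicit Types V W T D : gmod F g.

Lemma du_linfun {V} (p : C V) {phi} : du V phi -> linfun phi.
Proof. exact: du_cat.1. Qed.

Lemma du_comb {V} (p : C V) a {phi psi} : du V phi -> du V psi -> du V (fun v => a * phi v + psi v).
Proof. exact: (du_cat.2.1 V p).2. Qed.

Lemma du_ext {V} {phi psi : V -> F} : du V phi -> phi =1 psi -> du V psi.
Proof. by move=> du_phi /functional_extensionality <-. Qed.

Lemma duZ {V} (p : C V) a {phi} : du V phi -> du V (fun v => a * phi v).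
Proof.
by move=> du_phi; apply: du_ext (du_comb p a du_phi (du_cat.2.1 V p).1) _ => v; rewrite addr0.
Qed.

Lemma du_sum {V} (p : C V) n (phis : 'I_n -> V -> F) : (forall i, du V (phis i)) ->
  du V (fun v => \sum_(i < n) phis i v).
Proof.
elim: n phis => [|n IH] phis du_phis.
  by apply: du_ext (du_cat.2.1 V p).1 _ => v; rewrite big_ord0.
have := du_comb p 1 (du_phis ord0) (IH (fun i => phis (lift ord0 i)) (fun i => du_phis _)).
by move/du_ext; apply => v; rewrite big_ord_recl mul1r.
Qed.

Lemma du_separates {V} (p : C V) {v : V} : v <> 0 -> exists phi, du V phi /\ phi v <> 0.
Proof. exact: du_cat.2.2.1. Qed.

Lemma eq_by_du {V} (p : C V) (v w : V) : (forall phi, du V phi -> phi v = phi w) -> v = w.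
Proof.
move=> vw; apply/eqP; rewrite -subr_eq0; apply/eqP; apply: NNPP => vw_neq0.
have [phi [du_phi []]] := du_separates p vw_neq0.
by rewrite (linfunB (du_linfun p du_phi)) vw // subrr.
Qed.

Lemma du_biprod {V W D} (p : C V) (q : C W) (r : C D) {i1 i2 p1 p2 phi psi} :
  @biprod F g V W D i1 i2 p1 p2 -> du V phi -> du W psi -> du D (fun d => phi (p1 d) + psi (p2 d)).
Proof.
by move=> bp du_phi du_psi; apply/(du_cat.2.2.2.2.2.1 V W D _ _ _ _ p q r bp); exists phi, psi.
Qed.

Lemma du_tensor {V W T} (p : C V) (q : C W) (r : C T) {t : V -> W -> T} {phi psi chi} :
  tensor_obj t -> du V phi -> du W psi -> linfun chi ->
  (forall v w, chi (t v w) = phi v * psi w) -> du T chi.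
Proof. by move=> t_obj; apply: (du_cat.2.2.2.2.2.2 V W T t p q r t_obj). Qed.

Lemma tensor_eq_by_products {V W T} (p : C V) (q : C W) {t : V -> W -> T} (s s' : T) :
  tensor_obj t ->
  (forall phi psi chi, du V phi -> du W psi -> linfun chi ->
     (forall v w, chi (t v w) = phi v * psi w) -> chi s = chi s') -> s = s'.
Proof.
move=> t_obj ss'; apply/eqP; rewrite -subr_eq0; apply/eqP.
apply: (tensor_prod_separated t_obj.1 (fun _ => du_linfun p) (fun _ => du_linfun q)
  (fun _ => du_separates p) (fun _ => du_separates q)) => phi psi chi du_phi du_psi chi_lin chi_t.
by rewrite (linfunB chi_lin) (ss' phi psi chi) // subrr.
Qed.

Lemma isNat_linmap {m V} (p : C V) : isNat C du m -> linmap (m V p).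
Proof. by move=> m_nat; exact: (m_nat.1 V p).1. Qed.

Lemma isNat_du {m V} (p : C V) {phi} : isNat C du m -> du V phi -> du V (phi \o m V p).
Proof. by move=> m_nat; exact: (m_nat.1 V p).2. Qed.

Lemma isNat_morph {m V W} (p : C V) (q : C W) {al : V -> W} :
  isNat C du m -> morph al -> forall v, al (m V p v) = m W q (al v).
Proof. by move=> m_nat; exact: m_nat.2 V W p q al. Qed.

Lemma isNat_comp m n : isNat C du m -> isNat C du n -> isNat C du (compN m n).
Proof.
move=> m_nat n_nat; split=> [V p|V W p q al al_morph v]; last first.
  by rewrite /compN (isNat_morph p q m_nat al_morph) (isNat_morph p q n_nat al_morph).
split=> [a v w|phi du_phi]; last exact: (isNat_du p n_nat (isNat_du p m_nat du_phi)).
by rewrite /compN (isNat_linmap p n_nat) (isNat_linmap p m_nat).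
Qed.

Lemma isNat_lincomb2 a x y : isNat C du x -> isNat C du y -> isNat C du (lincomb2 a x y).
Proof.
move=> x_nat y_nat; split=> [V p|V W p q al al_morph v]; last first.
  rewrite /lincomb2 (linmapD al_morph.1) (linmapZ al_morph.1).
  by rewrite (isNat_morph p q x_nat al_morph) (isNat_morph p q y_nat al_morph).
split=> [b u w|phi du_phi].
  rewrite /lincomb2 (isNat_linmap p x_nat) (isNat_linmap p y_nat).
  by rewrite !scalerDr !scalerA [b * a]mulrC addrACA.
apply: du_ext (du_comb p a (isNat_du p x_nat du_phi) (isNat_du p y_nat du_phi)) _ => v.
by rewrite /= /lincomb2 (linfunD (du_linfun p du_phi)) (linfunZ (du_linfun p du_phi)).
Qed.

Lemma isNat_brN x y : isNat C du x -> isNat C du y -> isNat C du (brN x y).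
Proof.
move=> x_nat y_nat; split=> [V p|V W p q al al_morph v]; last first.
  rewrite /brN (linmapB al_morph.1).
  by rewrite !(isNat_morph p q x_nat al_morph, isNat_morph p q y_nat al_morph).
split=> [b u w|phi du_phi].
  rewrite /brN !(isNat_linmap p x_nat, isNat_linmap p y_nat).
  by rewrite scalerBr addrACA opprD.
have du_xy := isNat_du p y_nat (isNat_du p x_nat du_phi).
have du_yx := isNat_du p x_nat (isNat_du p y_nat du_phi).
apply: du_ext (du_comb p (-1) du_yx du_xy) _ => v.
by rewrite /= /brN (linfunB (du_linfun p du_phi)) mulN1r addrC.
Qed.

Lemma isNat_lincombN us c : (forall i, (i < size us)%N -> isNat C du (nth idN us i)) ->
  isNat C du (lincombN us c).
Proof.
move=> us_nat; have {}us_nat i : isNat C du (nth idN us i).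
  by case: (ltnP i (size us)) => [/us_nat // | ?]; rewrite nth_default.
split=> [V p|V W p q al al_morph v]; last first.
  rewrite /lincombN (linmap_sum al_morph.1); apply: eq_bigr => i _.
  by rewrite (linmapZ al_morph.1) (isNat_morph p q (us_nat i) al_morph).
split=> [b u w|phi du_phi].
  rewrite /lincombN scaler_sumr -big_split; apply: eq_bigr => i _.
  by rewrite (isNat_linmap p (us_nat i)) scalerDr !scalerA mulrC.
have du_comp i := duZ p c`_i (isNat_du p (us_nat i) du_phi).
apply: du_ext (du_sum p _ _ du_comp) _ => v.
rewrite /= /lincombN (linfun_sum (du_linfun p du_phi)); apply: eq_bigr => i _.
by rewrite (linfunZ (du_linfun p du_phi)).
Qed.

Definition tensor_mul (m : NatT C) := forall V W T (p : C V) (q : C W) (r : C T) (t : V -> W -> T),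
  tensor_obj t -> forall v w, m T r (t v w) = t (m V p v) (m W q w).
Definition tensor_der (x : NatT C) := forall V W T (p : C V) (q : C W) (r : C T) (t : V -> W -> T),
  tensor_obj t -> forall v w, x T r (t v w) = t (x V p v) w + t v (x W q w).
Definition trivial_fixed (m : NatT C) := forall V (p : C V), trivial1 V -> forall v, m V p v = v.
Definition trivial_killed (x : NatT C) := forall V (p : C V), trivial1 V -> forall v, x V p v = 0.

Lemma isM_Nat {m} : isM C du m -> isNat C du m. Proof. by case. Qed.
Lemma isM_tensor_mul {m} : isM C du m -> tensor_mul m. Proof. by case=> _ []. Qed.
Lemma isM_trivial_fixed {m} : isM C du m -> trivial_fixed m. Proof. by case=> _ []. Qed.

Lemma isM_id : isM C du idN.
Proof. by []. Qed.

Lemma isM_comp m n : isM C du m -> isM C du n -> isM C du (compN m n).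
Proof.
move=> [m_nat [m_mul m_fix]] [n_nat [n_mul n_fix]].
split; first exact: isNat_comp.
split=> [V W T p q r t t_obj v w|V p triv v]; rewrite /compN.
  by rewrite (n_mul _ _ _ p q r t t_obj) (m_mul _ _ _ p q r t t_obj).
by rewrite n_fix // m_fix.
Qed.

Lemma coef_lincomb {V W} (p : C V) (q : C W) (v : V) (w : W) {phi psi} a :
  du V phi -> du W psi -> exists D (r : C D) (u : D) chi, du D chi /\
    forall m, isNat C du m -> coef r u chi m = a * coef p v phi m + coef q w psi m.
Proof.
move=> du_phi du_psi; have [D [i1 [i2 [p1 [p2 [r bp]]]]]] := C_cat.2.2.1 V W p q.
have [i1_morph [i2_morph [p1_morph [p2_morph [p1i1 [p2i2 [p2i1 [p1i2 _]]]]]]]] := bp.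
exists D, r, (i1 v + i2 w), (fun d => a * phi (p1 d) + psi (p2 d)); split.
  exact: (du_biprod p q r bp (duZ p a du_phi) du_psi).
move=> m m_nat; rewrite /coef (linmapD (isNat_linmap r m_nat)).
rewrite -(isNat_morph p r m_nat i1_morph) -(isNat_morph q r m_nat i2_morph).
by rewrite (linmapD p1_morph.1) (linmapD p2_morph.1) p1i1 p2i2 p2i1 p1i2 addr0 add0r.
Qed.

Lemma coef_mul {V W} (p : C V) (q : C W) (v : V) (w : W) {phi psi} :
  du V phi -> du W psi -> exists T (r : C T) (u : T) chi, du T chi /\
    (forall m, tensor_mul m -> coef r u chi m = coef p v phi m * coef q w psi m) /\
    (forall x, tensor_der x -> coef r u chi x = phi (x V p v) * psi w + phi v * psi (x W q w)).
Proof.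
move=> du_phi du_psi; have [T [t [r t_obj]]] := C_cat.2.2.2.1 V W p q.
have [chi [chi_lin chi_t]] :=
  tensor_prod_functional t_obj.1 (du_linfun p du_phi) (du_linfun q du_psi).
exists T, r, (t v w), chi; split; first exact: (du_tensor p q r t_obj du_phi du_psi chi_lin chi_t).
split=> [m m_mul|x x_der]; rewrite /coef; first by rewrite (m_mul _ _ _ p q r t t_obj) chi_t.
by rewrite (x_der _ _ _ p q r t t_obj) (linfunD chi_lin) !chi_t.
Qed.

Lemma coef_const a : exists V (p : C V) (e : V) phi, du V phi /\
  forall m, trivial_fixed m -> coef p e phi m = a.
Proof.
have [V [p triv]] := C_cat.2.2.2.2.1; have [[e [e_neq0 _]] _] := triv.
have [phi [du_phi phi_e]] := du_separates p e_neq0.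
exists V, p, e, (fun v => a / phi e * phi v); split; first exact: duZ.
by move=> m m_fix; rewrite /coef m_fix // divfK //; apply/eqP.
Qed.

Lemma inFM_ext {f h} : inFM C du f -> agreeM C du f h -> inFM C du h.
Proof.
move=> [V [p [v [phi [du_phi fE]]]]] fh; exists V, p, v, phi; split=> // m m_M.
by rewrite -(fh m m_M) (fE m m_M).
Qed.

Lemma inFM_coef {V} (p : C V) v {phi} : du V phi -> inFM C du (coef p v phi).
Proof. by move=> du_phi; exists V, p, v, phi. Qed.

Lemma inFM_const a : inFM C du (fun=> a).
Proof.
have [V [p [e [phi [du_phi phiE]]]]] := coef_const a.
by apply: inFM_ext (inFM_coef p e du_phi) _ => m /isM_trivial_fixed /phiE.
Qed.

Lemma inFM_lincomb a {f h} : inFM C du f -> inFM C du h -> inFM C du (fun m => a * f m + h m).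
Proof.
move=> [V [p [v [phi [du_phi fE]]]]] [W [q [w [psi [du_psi hE]]]]].
have [D [r [u [chi [du_chi chiE]]]]] := coef_lincomb p q v w a du_phi du_psi.
apply: inFM_ext (inFM_coef r u du_chi) _ => m m_M /=.
by rewrite (chiE m (isM_Nat m_M)) (fE m m_M) (hE m m_M).
Qed.

Lemma inFM_mul {f h} : inFM C du f -> inFM C du h -> inFM C du (fun m => f m * h m).
Proof.
move=> [V [p [v [phi [du_phi fE]]]]] [W [q [w [psi [du_psi hE]]]]].
have [T [r [u [chi [du_chi [chiE _]]]]]] := coef_mul p q v w du_phi du_psi.
apply: inFM_ext (inFM_coef r u du_chi) _ => m m_M /=.
by rewrite (chiE m (isM_tensor_mul m_M)) (fE m m_M) (hE m m_M).
Qed.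

Lemma FNat_gen_inFM h : FNat_gen F g C du h -> inFM C du h.
Proof.
elim=> {h} [a|V p v phi du_phi|f h _ f_FM _ h_FM|f h _ f_FM _ h_FM].
- exact: inFM_const.
- exact: inFM_coef.
- by apply: inFM_ext (inFM_lincomb 1 f_FM h_FM) _ => m _; rewrite mul1r.
- exact: inFM_mul.
Qed.

Lemma inFM_restrictionP f : inFM C du f <-> exists h, inFNat C du h /\ agreeM C du f h.
Proof.
split=> [[V [p [v [phi [du_phi fE]]]]]|[h [[k [k_gen hk]] fh]]].
  by exists (coef p v phi); split=> //; exists (coef p v phi); split=> //; apply: FG_coef.
by apply: inFM_ext (FNat_gen_inFM _ k_gen) _ => m m_M; rewrite (fh m m_M) (hk m (isM_Nat m_M)).
Qed.

Definition M_equations (h : NatT C -> F) :=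
  (exists V W T (p : C V) (q : C W) (r : C T) (t : V -> W -> T) v w phi psi chi,
     tensor_obj t /\ du V phi /\ du W psi /\ du T chi /\
     (forall v w, chi (t v w) = phi v * psi w) /\
     h = fun m => coef r (t v w) chi m - coef p v phi m * coef q w psi m) \/
  (exists V (p : C V) v phi, trivial1 V /\ du V phi /\ h = fun m => coef p v phi m - phi v).

Lemma M_equations_FNat h : M_equations h -> inFNat C du h.
Proof.
case=> [[V [W [T [p [q [r [t [v [w [phi [psi [chi [_ [du_phi [du_psi [du_chi [_ ->]]]]]]]]]]]]]]]]]
      |[V [p [v [phi [_ [du_phi ->]]]]]]].
  exists (fun m => coef r (t v w) chi m + (fun=> -1) m * (coef p v phi m * coef q w psi m)).
  split=> [|m _]; last by rewrite mulN1r.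
  apply: FG_add; first exact: FG_coef.
  by apply: FG_mul; [apply: FG_cst | apply: FG_mul; apply: FG_coef].
exists (fun m => coef p v phi m + (fun=> - phi v) m); split=> //.
by apply: FG_add; [apply: FG_coef | apply: FG_cst].
Qed.

Lemma isM_equationsP m : isNat C du m -> isM C du m <-> forall h, M_equations h -> h m = 0.
Proof.
move=> m_nat; split=> [m_M h|eqs].
  case=> [[V [W [T [p [q [r [t [v [w [phi [psi [chi [t_obj [_ [_ [_ [chi_t ->]]]]]]]]]]]]]]]]]
        |[V [p [v [phi [triv [_ ->]]]]]]]; rewrite /coef.
    by rewrite (isM_tensor_mul m_M _ _ _ p q r t t_obj) chi_t subrr.
  by rewrite isM_trivial_fixed // subrr.
split=> //; split=> [V W T p q r t t_obj v w|V p triv v].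
  apply: (tensor_eq_by_products p q _ _ t_obj) => phi psi chi du_phi du_psi chi_lin chi_t.
  apply/eqP; rewrite chi_t -subr_eq0; apply/eqP.
  apply: (eqs (fun m => coef r (t v w) chi m - coef p v phi m * coef q w psi m)).
  left; exists V, W, T, p, q, r, t, v, w, phi, psi, chi.
  by do !split=> //; exact: (du_tensor p q r t_obj du_phi du_psi chi_lin chi_t).
apply: (eq_by_du p) => phi du_phi; apply/eqP; rewrite -subr_eq0; apply/eqP.
by apply: (eqs (fun m => coef p v phi m - phi v)); right; exists V, p, v, phi.
Qed.

Definition FM_linear (d : (NatT C -> F) -> F) := forall a f h, inFM C du f -> inFM C du h ->
  d (fun m => a * f m + h m) = a * d f + d h.
Definition FM_der_at1 (d : (NatT C -> F) -> F) := forall f h, inFM C du f -> inFM C du h ->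
  d (fun m => f m * h m) = f idN * d h + h idN * d f.

Lemma reprD_FM_linear {d x} : isNat C du x -> reprD C du d x -> FM_linear d.
Proof.
move=> x_nat [d_resp d_coef] a f h [V [p [v [phi [du_phi fE]]]]] [W [q [w [psi [du_psi hE]]]]].
have [D [r [u [chi [du_chi chiE]]]]] := coef_lincomb p q v w a du_phi du_psi.
have -> : d (fun m => a * f m + h m) = d (coef r u chi).
  by apply: d_resp => m m_M; rewrite (chiE m (isM_Nat m_M)) (fE m m_M) (hE m m_M).
by rewrite (d_resp f _ fE) (d_resp h _ hE) !d_coef //; apply: chiE.
Qed.

Lemma reprD_FM_der_at1 {d x} : tensor_der x -> reprD C du d x -> FM_der_at1 d.
Proof.
move=> x_der [d_resp d_coef] f h [V [p [v [phi [du_phi fE]]]]] [W [q [w [psi [du_psi hE]]]]].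
have [T [r [u [chi [du_chi [chi_mul chi_der]]]]]] := coef_mul p q v w du_phi du_psi.
have -> : d (fun m => f m * h m) = d (coef r u chi).
  by apply: d_resp => m m_M; rewrite (chi_mul m (isM_tensor_mul m_M)) (fE m m_M) (hE m m_M).
rewrite (d_resp f _ fE) (d_resp h _ hE) (fE _ isM_id) (hE _ isM_id) !d_coef //.
by rewrite [LHS](chi_der x x_der) /coef /idN addrC [psi w * _]mulrC.
Qed.

Lemma FM_der_at1_const {d} : FM_linear d -> FM_der_at1 d -> forall a, d (fun=> a) = 0.
Proof.
move=> d_lin d_der a.
have d1 : d (fun=> 1) = 0.
  have := d_der _ _ (inFM_const 1) (inFM_const 1); rewrite mulr1 !mul1r => d1_double.
  by apply: (addrI (d (fun=> 1))); rewrite addr0 -d1_double.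
have d0 : d (fun=> 0) = 0.
  by have := d_der _ _ (inFM_const 0) (inFM_const 0); rewrite mulr0 !mul0r addr0.
by have := d_lin a _ _ (inFM_const 1) (inFM_const 0); rewrite mulr1 addr0 d1 d0 mulr0 addr0.
Qed.

Lemma lincombN_line x s V (p : C V) v : lincombN [:: idN; x] [:: 1; s] V p v = v + s *: x V p v.
Proof. by rewrite /lincombN /= !big_ord_recl big_ord0 addr0 scale1r. Qed.

Lemma FNat_gen_line_poly {d x} : isNat C du x -> tensor_der x -> reprD C du d x ->
  forall k, FNat_gen F g C du k -> exists P : {poly F},
    (forall s, P.[s] = k (lincombN [:: idN; x] [:: 1; s])) /\ P`_1 = d k /\ P`_0 = k idN.
Proof.
move=> x_nat x_der d_repr; have d_lin := reprD_FM_linear x_nat d_repr.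
have d_der := reprD_FM_der_at1 x_der d_repr.
move=> k; elim=> {k} [a|V p v phi du_phi|f h f_gen [P [PE [P1 P0]]] h_gen [Q [QE [Q1 Q0]]]
           |f h f_gen [P [PE [P1 P0]]] h_gen [Q [QE [Q1 Q0]]]].
- exists a%:P; split=> [s|]; first by rewrite hornerC.
  by rewrite !coefC /= FM_der_at1_const.
- exists ((phi v)%:P + phi (x V p v) *: 'X); split=> [s|].
    rewrite hornerD hornerC hornerZ hornerX /coef lincombN_line.
    by rewrite (linfunD (du_linfun p du_phi)) (linfunZ (du_linfun p du_phi)) mulrC.
  rewrite !coefD !coefC !coefZ !coefX /= mulr1 mulr0 add0r addr0.
  by split=> //; rewrite d_repr.2.
- exists (P + Q); split=> [s|]; first by rewrite hornerD PE QE.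
  split; last by rewrite coefD P0 Q0.
  rewrite coefD P1 Q1 -[d f]mul1r -(d_lin 1 f h (FNat_gen_inFM _ f_gen) (FNat_gen_inFM _ h_gen)).
  by apply: d_repr.1 => m _ /=; rewrite mul1r.
exists (P * Q); split=> [s|]; first by rewrite hornerM PE QE.
split; last by rewrite coefM big_ord1 P0 Q0.
rewrite (d_der f h (FNat_gen_inFM _ f_gen) (FNat_gen_inFM _ h_gen)) coefM.
by rewrite !big_ord_recl big_ord0 addr0 /= P0 Q0 P1 Q1 [d f * _]mulrC.
Qed.

Definition vanishing_ideal (us : seq (NatT C)) (h : NatT C -> F) :=
  inFNat C du h /\ forall u, inSpan us u -> h u = 0.

Lemma filterNat_vanishing_ideal us : (forall i, (i < size us)%N -> isNat C du (nth idN us i)) ->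
  filterNat C du (vanishing_ideal us).
Proof.
move=> us_nat; have span_nat u : inSpan us u -> isNat C du u.
  by move=> [c ->]; apply: isNat_lincombN.
split; last by exists us; split=> // h.
split; first by move=> h [].
split; first by split=> //; exists (fun=> 0); split=> //; apply: FG_cst.
split=> [h h' [[k [k_gen hk]] h0] [[k' [k'_gen h'k']] h'0]|].
  split=> [|u u_span]; last by rewrite h0 // h'0 // addr0.
  by exists (fun m => k m + k' m); split=> [|m m_nat]; [apply: FG_add | rewrite hk // h'k'].
split=> [h f [[k [k_gen hk]] h0] [k' [k'_gen fk']]|h h' [[k [k_gen hk]] h0] hh'].
  split=> [|u u_span]; last by rewrite h0 // mulr0.
  by exists (fun m => k' m * k m); split=> [|m m_nat]; [apply: FG_mul | rewrite hk // fk'].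
split=> [|u u_span]; last by rewrite -(hh' u (span_nat u u_span)) h0.
by exists k; split=> // m m_nat; rewrite -hh' // hk.
Qed.

Hypothesis F_char0 : [pchar F] =i pred0.

Lemma reprD_isT1 x d : isLieM C du x -> reprD C du d x -> isT1 C du d.
Proof.
move=> [x_nat [x_der _]] d_repr.
have line_nat i : (i < 2)%N -> isNat C du (nth idN [:: idN; x] i) by case: i => [|[|]].
split; first exact: d_repr.1.
split; first exact: reprD_FM_linear x_nat d_repr.
split; first exact: reprD_FM_der_at1 x_der d_repr.
exists (vanishing_ideal [:: idN; x]); split.
  exact: (filterNat_vanishing_ideal [:: idN; x] line_nat).
move=> h [[k [k_gen hk]] h0].
have [P [PE [P1 _]]] := FNat_gen_line_poly x_nat x_der d_repr k k_gen.
have P_eq0 : P = 0.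
  apply: pchar0_poly_eq0 F_char0 _ => s.
  rewrite PE -(hk _ (isNat_lincombN [:: idN; x] [:: 1; s] line_nat)).
  by apply: h0; exists [:: 1; s].
have -> : d h = d k by apply: d_repr.1 => m m_M; apply: hk (isM_Nat m_M).
by rewrite -P1 P_eq0 coef0.
Qed.

Lemma reprD_inj d x y : reprD C du d x -> reprD C du d y -> x = y.
Proof.
move=> [_ dx] [_ dy]; apply: functional_extensionality_dep => V.
apply: functional_extensionality_dep => p; apply: functional_extensionality => v.
by apply: (eq_by_du p) => phi du_phi; rewrite -dx // dy.
Qed.

Record coef_datum := CoefDatum {
  cd_obj : gmod F g; cd_C : C cd_obj;
  cd_vec : cd_obj; cd_fun : cd_obj -> F; cd_du : du cd_obj cd_fun }.

Definition cd_coef (l : coef_datum) : NatT C -> F := coef (cd_C l) (cd_vec l) (cd_fun l).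

Lemma isT1_reprD d : isT1 C du d -> exists x, isNat C du x /\ reprD C du d x.
Proof.
move=> [d_resp [d_lin [_ [J [[_ [us [us_nat usJ]]] dJ]]]]].
pose gs (i : 'I_(size us)) (l : coef_datum) := cd_coef l (nth idN us i).
have [a l1 l2|l l_ker|c dE] := @kernel_inclusion_span F _ _ gs (fun l => d (cd_coef l)).
- have [D [r [u [chi [du_chi chiE]]]]] := coef_lincomb (cd_C l1) (cd_C l2) (cd_vec l1) (cd_vec l2) a
    (cd_du l1) (cd_du l2).
  exists (CoefDatum D r u chi du_chi); split=> [|i]; last exact/chiE/us_nat.
  rewrite /= -(d_lin a _ _ (inFM_coef _ _ (cd_du l1)) (inFM_coef _ _ (cd_du l2))).
  by apply: d_resp => m m_M; apply/chiE/isM_Nat.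
- apply/dJ/usJ => [|u [c ->]].
    by exists (cd_coef l); split=> //; apply: FG_coef (cd_du l).
  have phi_lin := du_linfun (cd_C l) (cd_du l).
  rewrite /cd_coef /coef /lincombN (linfun_sum phi_lin); apply: big1 => i _.
  by rewrite (linfunZ phi_lin); have := l_ker i; rewrite /gs /cd_coef /coef => ->; rewrite mulr0.
exists (lincombN us c); split; first exact: isNat_lincombN.
split=> // V p v phi du_phi; rewrite (dE (CoefDatum V p v phi du_phi)) /lincombN.
rewrite (linfun_sum (du_linfun p du_phi)); apply: eq_bigr => i _.
by rewrite (linfunZ (du_linfun p du_phi)).
Qed.

Lemma reprD_tensor_der {d x} : FM_der_at1 d -> reprD C du d x -> tensor_der x.
Proof.
move=> d_der [d_resp d_coef] V W T p q r t t_obj v w.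
apply: (tensor_eq_by_products p q _ _ t_obj) => phi psi chi du_phi du_psi chi_lin chi_t.
have du_chi := du_tensor p q r t_obj du_phi du_psi chi_lin chi_t.
rewrite (linfunD chi_lin) !chi_t -(d_coef T r (t v w) chi du_chi).
have -> : d (coef r (t v w) chi) = d (fun m => coef p v phi m * coef q w psi m).
  by apply: d_resp => m m_M; rewrite /coef (isM_tensor_mul m_M _ _ _ p q r t t_obj) chi_t.
rewrite (d_der _ _ (inFM_coef p v du_phi) (inFM_coef q w du_psi)) !d_coef //.
by rewrite /coef /idN addrC [psi w * _]mulrC.
Qed.

Lemma reprD_trivial_killed {d x} :
  FM_linear d -> FM_der_at1 d -> reprD C du d x -> trivial_killed x.
Proof.
move=> d_lin d_der [d_resp d_coef] V p triv v; apply: (eq_by_du p) => phi du_phi.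
rewrite (linfun0 (du_linfun p du_phi)) -(d_coef V p v phi du_phi).
have -> : d (coef p v phi) = d (fun=> phi v).
  by apply: d_resp => m m_M; rewrite /coef (isM_trivial_fixed m_M).
exact: FM_der_at1_const d_lin d_der (phi v).
Qed.

Lemma isT1_isLieM d : isT1 C du d -> exists x, isLieM C du x /\ reprD C du d x.
Proof.
move=> d_T1; have [x [x_nat d_repr]] := isT1_reprD d d_T1.
have [_ [d_lin [d_der _]]] := d_T1.
exists x; do !split=> //; last by exists d.
- exact: reprD_tensor_der d_der d_repr.
- exact: reprD_trivial_killed d_lin d_der d_repr.
Qed.

Lemma reprD_lincomb2 a {d d' x y} : reprD C du d x -> reprD C du d' y ->
  reprD C du (fun f => a * d f + d' f) (lincomb2 a x y).
Proof.
move=> [d_resp d_coef] [d'_resp d'_coef]; split=> [f h fh|V p v phi du_phi].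
  by rewrite (d_resp f h fh) (d'_resp f h fh).
rewrite d_coef // d'_coef // /lincomb2.
by rewrite (linfunD (du_linfun p du_phi)) (linfunZ (du_linfun p du_phi)).
Qed.

Lemma isLieM_lincomb2 a x y : isLieM C du x -> isLieM C du y -> isLieM C du (lincomb2 a x y).
Proof.
move=> [x_nat [x_der [x_triv [d dx]]]] [y_nat [y_der [y_triv [d' dy]]]].
split; first exact: isNat_lincomb2.
split=> [V W T p q r t t_obj v w|]; last split=> [V p triv v|].
- have [[t_l t_r] _] := t_obj.1.
  rewrite /lincomb2 (x_der _ _ _ p q r t t_obj) (y_der _ _ _ p q r t t_obj).
  rewrite (linmapD (t_l w)) (linmapZ (t_l w)) (linmapD (t_r v)) (linmapZ (t_r v)).
  by rewrite scalerDr addrACA.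
- by rewrite /lincomb2 x_triv // y_triv // scaler0 addr0.
- by exists (fun f => a * d f + d' f); apply: reprD_lincomb2.
Qed.

Lemma reprD_bracketT {d d' x y} : reprD C du d x -> reprD C du d' y ->
  reprD C du (bracketT d d') (brN x y).
Proof.
move=> [d_resp d_coef] [d'_resp d'_coef].
have compM m n : isM C du m -> isM C du n -> isM C du (compN (compN idN m) n).
  by move=> m_M n_M; apply: isM_comp => //; apply: isM_comp isM_id m_M.
split=> [f h fh|V p v phi du_phi].
  rewrite /bracketT /Dop; congr (_ - _).
    by apply: d_resp => m m_M; apply: d'_resp => n n_M; apply: fh; apply: compM.
  by apply: d'_resp => m m_M; apply: d_resp => n n_M; apply: fh; apply: compM.
have inner (e e' : (NatT C -> F) -> F) (z : NatT C) : respM C du e ->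
    (forall V p v phi, du V phi -> e' (coef p v phi) = phi (z V p v)) ->
    e (fun m => e' (fun n => coef p v phi (compN (compN idN m) n))) = e (coef p (z V p v) phi).
  move=> e_resp e'_coef; apply: e_resp => m m_M.
  exact: (e'_coef V p v (phi \o m V p) (isNat_du p (isM_Nat m_M) du_phi)).
rewrite /bracketT /Dop (inner d d' y d_resp d'_coef) (inner d' d x d'_resp d_coef).
rewrite d_coef // d'_coef //.
by rewrite /brN (linfunB (du_linfun p du_phi)).
Qed.

Lemma tensor_der_comp x y {V W T} (p : C V) (q : C W) (r : C T) (t : V -> W -> T) v w :
  isNat C du x -> tensor_der x -> tensor_der y -> tensor_obj t ->
  x T r (y T r (t v w)) =
    (t (x V p (y V p v)) w + t v (x W q (y W q w))) +
    (t (y V p v) (x W q w) + t (x V p v) (y W q w)).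
Proof.
move=> x_nat x_der y_der t_obj.
rewrite (y_der _ _ _ p q r t t_obj) (linmapD (isNat_linmap r x_nat)) !(x_der _ _ _ p q r t t_obj).
by rewrite [t (x V p v) _ + _]addrC addrACA.
Qed.

Lemma isLieM_brN x y : isLieM C du x -> isLieM C du y -> isLieM C du (brN x y).
Proof.
move=> [x_nat [x_der [x_triv [d dx]]]] [y_nat [y_der [y_triv [d' dy]]]].
split; first exact: isNat_brN.
split=> [V W T p q r t t_obj v w|]; last split=> [V p triv v|].
- have [[t_l t_r] _] := t_obj.1.
  rewrite /brN (tensor_der_comp x y p q r t v w) // (tensor_der_comp y x p q r t v w) //.
  rewrite [t (y V p v) _ + _]addrC opprD addrACA subrr addr0.
  by rewrite (linmapB (t_l w)) (linmapB (t_r v)) opprD addrACA.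
- by rewrite /brN x_triv // y_triv // subrr.
- by exists (bracketT d d'); apply: reprD_bracketT.
Qed.

End WeakAlgebraicMonoid.

Theorem theorem3p7 (F : fieldType) (g : lmodType F) (br : g -> g -> g)
  (C : gmod F g -> Prop) (du : forall V : gmod F g, (V -> F) -> Prop) :
  [pchar F] =i pred0 -> lie_algebra br -> category br C -> dual_cat C du ->
  (* (a) M is a Zariski closed submonoid of Nat *)
  ((forall m, isM C du m -> isNat C du m) /\
   isM C du (@idN F g C) /\
   (forall m n, isM C du m -> isM C du n -> isM C du (compN m n)) /\
   (exists S : (NatT C -> F) -> Prop, (forall h, S h -> inFNat C du h) /\
      forall m, isNat C du m -> (isM C du m <-> forall h, S h -> h m = 0))) /\
  (* (b) F[M] is the restriction of F[Nat] to M *)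
  (forall f : NatT C -> F, inFM C du f <-> exists h, inFNat C du h /\ agreeM C du f h) /\
  (* (c) x |-> delta_x is a Lie algebra isomorphism Lie(M) -> T_1 M *)
  ((forall x d, isLieM C du x -> reprD C du d x -> isT1 C du d) /\
   (forall x y d, isLieM C du x -> isLieM C du y -> reprD C du d x -> reprD C du d y -> x = y) /\
   (forall d, isT1 C du d -> exists x, isLieM C du x /\ reprD C du d x) /\
   (forall (a : F) x y, isLieM C du x -> isLieM C du y ->
      isLieM C du (lincomb2 a x y) /\
      forall d d', reprD C du d x -> reprD C du d' y ->
        reprD C du (fun f => a * d f + d' f) (lincomb2 a x y)) /\
   (forall x y, isLieM C du x -> isLieM C du y ->
      isLieM C du (brN x y) /\
      forall d d', reprD C du d x -> reprD C du d' y -> reprD C du (bracketT d d') (brN x y))).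
Proof.
move=> F_char0 _ C_cat du_cat.
split.
  split; first by move=> m; apply: isM_Nat.
  split; first exact: isM_id.
  split; first exact: isM_comp.
  exists (@M_equations F g C du); split; [exact: M_equations_FNat | exact: (isM_equationsP du_cat)].
split; first exact: (inFM_restrictionP C_cat du_cat).
split; first exact: (reprD_isT1 C_cat du_cat F_char0).
split; first by move=> x y d _ _; apply: (reprD_inj du_cat).
split; first exact: (isT1_isLieM C_cat du_cat).
split=> [a x y x_Lie y_Lie|x y x_Lie y_Lie].
  by split=> [|d d']; [exact: (isLieM_lincomb2 du_cat) | exact: (reprD_lincomb2 du_cat)].
by split=> [|d d']; [exact: (isLieM_brN du_cat) | exact: (reprD_bracketT du_cat)].
Qed.
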